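(* Let $Y$ be a Hausdorff space and $g:Y\to X/\!/G$ continuous. Then: (1) $\iota_g:W_g\to Y\times\mathbb C$ is a topological embedding, and under the homeomorphism $W_g\cong E_g:=\iota_g(W_g)$, the covering $\pi_W:W_g\to Y$ corresponds to the restriction of the first projection $p_1|_{E_g}:E_g\to Y$; in particular $p_1|_{E_g}$ is a covering space equivalent to $\pi_W$. (2) With $F:=\overline P\circ g:Y\to C^{lf}_\infty(\mathbb C)$, one has $E_g=\{(y,z)\in Y\times\mathbb C: z\in F(y)\}$, and $E_g$ is closed in $Y\times\mathbb C$.
   Context: $X=\mathrm{Conf}^{lf}_\infty(\mathbb C)$ is the space of sequences $(x_j)_{j\ge1}$ of pairwise distinct complex numbers with $\{j:|x_j|\le R\}$ finite for all $R$, metrized by $d_{\Sigma}(x,y)=\sum_j2^{-j}\min\{|x_j-y_j|,1\}+d_{\mathcal V}(P(x),P(y))$, where $P(x)=\{x_j\}\in C^{lf}_\infty(\mathbb C)$ (countably infinite locally finite subsets of $\mathbb C$, with the vague topology/vague metric $d_{\mathcal V}$). $G=\mathrm{Aut}(\mathbb N)$ discrete, acting by $\sigma\cdot(x_j)=(x_{\sigma(j)})$; $EG$ a contractible free right $G$-CW complex; $X/\!/G=(EG\times X)/G$ with $(e,x)\cdot\sigma=(e\sigma^{-1},\sigma\cdot x)$; the quotient $EG\times X\to X/\!/G$ is a principal $G$-bundle. $\overline P:X/\!/G\to C^{lf}_\infty(\mathbb C)$, $\overline P([e,x])=P(x)$. $P_g=g^*(EG\times X)\to Y$ is the pullback principal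 $G$-bundle (points $(y,e,x)$), $W_g=P_g\times_G\mathbb N$ (with $((y,e,x)\cdot\sigma,n)\sim((y,e,x),\sigma\cdot n)$), $\pi_W:W_g\to Y$ the projection, $\mathrm{ev}_g([(y,e,x),n])=x_n$, and $\iota_g(w)=(\pi_W(w),\mathrm{ev}_g(w))$. *)

From HB Require Import structures.
From mathcomp Require Import all_boot all_order all_algebra.
From mathcomp Require Import all_classical all_reals topology normedtype.
Import numFieldNormedType.Exports.
Import GRing.Theory Num.Theory.
Local Open Scope classical_set_scope.
Local Open Scope ring_scope.

(* The complex plane C is modelled as R x R (R : realType) with its    *)
(* product (= Euclidean) topology.                                     *)
Notation CC R := (R * R)%type.

Definition cmod {R : realType} (z : CC R) : R := Num.sqrt (z.1 ^+ 2 + z.2 ^+ 2).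

Definition gen_open {T : Type} (B : set (set T)) (U : set T) : Prop :=
  forall t, U t -> exists (n : nat) (b : nat -> set T),
    (forall i, (i < n)%N -> B (b i)) /\ (forall i, (i < n)%N -> b i t) /\
    (forall s, (forall i, (i < n)%N -> b i s) -> U s).

Definition cts {A B : Type} (opA : set (set A)) (opB : set (set B)) (f : A -> B) :=
  forall V, opB V -> opA (f @^-1` V).

(* The group G = Aut(N) of bijections of N (discrete).                 *)
Record autN := AutN {
  aut_fun : nat -> nat ;
  aut_inv : nat -> nat ;
  aut_funK : cancel aut_fun aut_inv ;
  aut_invK : cancel aut_inv aut_fun }.

Definition aut_id : autN := @AutN id id (fun _ => erefl) (fun _ => erefl).

Definition aut_comp (s t : autN) : autN :=
  @AutN (aut_fun s \o aut_fun t) (aut_inv t \o aut_inv s)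
    (fun n => etrans (f_equal (aut_inv t) (aut_funK s (aut_fun t n))) (aut_funK t n))
    (fun n => etrans (f_equal (aut_fun s) (aut_invK t (aut_inv s n))) (aut_invK s n)).

(* EG : a free right G-space on which G = Aut(N) acts by a covering-space *)
(* (properly discontinuous) action, and which is contractible.           *)
Definition right_action (EG : topologicalType) (act : EG -> autN -> EG) : Prop :=
  (forall e, act e aut_id = e) /\
  (forall e s t, act (act e s) t = act e (aut_comp s t)) /\
  (forall s, continuous (act^~ s)).

Definition covering_action (EG : topologicalType) (act : EG -> autN -> EG) : Prop :=
  forall e, exists U : set EG, open U /\ U e /\
    forall (s : autN) u, U u -> U (act u s) -> aut_fun s =1 id.

Definition contractible (R : realType) (T : topologicalType) : Prop :=
  exists (t0 : T) (H : (T * R)%type -> T),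
    ({within [set p : (T * R)%type | 0 <= p.2 <= 1], continuous H}) /\
    (forall t, H (t, 0) = t) /\ (forall t, H (t, 1) = t0).

Section Construction.
Context (R : realType).
Local Notation C := (CC R).

Definition locfin (S : set C) : Prop :=
  forall r : R, finite_set (S `&` [set z | cmod z <= r]).

Definition Clf : set (set C) :=
  [set S | countable S /\ infinite_set S /\ locfin S].

Definition testfun (f : C -> R) : Prop :=
  continuous f /\ compact (closure [set z | f z != 0]).

(* pairing of a locally finite set (as a counting measure) with f *)
Definition vpair (f : C -> R) (S : set C) : R := \sum_(z \in S) f z.

(* subbase of the vague topology: S |-> sum_{z in S} f z is continuous  *)
Definition vague_subbase : set (set (set C)) :=
  [set V | exists (f : C -> R) (U : set R),
     testfun f /\ open U /\ V = [set S | U (vpair f S)]].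

(* X = Conf^lf_oo(C): injective sequences with locally finite range.   *)
Definition Xset : set (nat -> C) :=
  [set x | injective x /\ forall r : R, finite_set [set j | cmod (x j) <= r]].

Definition Xsp := {x : nat -> C | Xset x}.

Definition Pmap (x : Xsp) : set C := range (sval x).

(* topology of d_Sigma : join of the product topology of the coordinates *)
(* (first summand) and the pull-back of the vague topology by P          *)
(* (second summand).                                                     *)
Definition X_subbase : set (set Xsp) :=
  [set V | (exists (j : nat) (U : set C), open U /\ V = [set x | U (sval x j)]) \/
           (exists W, vague_subbase W /\ V = [set x | W (Pmap x)])].

Definition openX : set (set Xsp) := gen_open X_subbase.

Definition actX (s : autN) (x : Xsp) (x' : Xsp) : Prop :=
  sval x' = sval x \o aut_fun s.

Context (EG : topologicalType) (act : EG -> autN -> EG).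

Definition EX := (EG * Xsp)%type.

Definition openEX : set (set EX) :=
  gen_open [set V | (exists U, open U /\ V = [set p : EX | U p.1]) \/
                    (exists U, openX U /\ V = [set p : EX | U p.2])].

Definition relEX (p q : EX) : Prop :=
  exists s : autN, p.1 = act q.1 s /\ actX s q.2 p.2.

(* X//G = (EG x X)/G : the set of orbits, with the quotient topology *)
Definition XG := {A : set EX | exists p, A = [set q | relEX q p]}.

Definition qXG (p : EX) : XG :=
  exist _ [set q | relEX q p] (ex_intro _ p erefl).

Definition openXG : set (set XG) := [set W | openEX (qXG @^-1` W)].

Definition reprXG (a : XG) : EX := sval (cid (svalP a)).

Definition Pbar (a : XG) : set C := Pmap (reprXG a).2.

Context (Y : topologicalType) (g : Y -> XG).

(* P_g = g^*(EG x X) = {(y, (e, x)) | g y = [e, x]} with the subspace   *)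
(* topology of the product Y x (EG x X).                                *)
Definition Pg := {p : (Y * EX)%type | g p.1 = qXG p.2}.

Definition openPg : set (set Pg) :=
  gen_open [set V | (exists U, open U /\ V = [set p : Pg | U (sval p).1]) \/
                    (exists U, openEX U /\ V = [set p : Pg | U (sval p).2])].

Definition PgN := (Pg * nat)%type.

Definition openPgN : set (set PgN) :=
  gen_open [set V | (exists U, openPg U /\ V = [set p : PgN | U p.1]) \/
                    (exists m : nat, V = [set p : PgN | p.2 = m])].

Definition relW (a b : PgN) : Prop :=
  exists s : autN,
    (sval a.1).1 = (sval b.1).1 /\
    (sval a.1).2.1 = act (sval b.1).2.1 s /\
    actX s (sval b.1).2.2 (sval a.1).2.2 /\
    b.2 = aut_fun s a.2.

(* W_g = P_g x_G N with the quotient topology *)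
Definition Wg := {A : set PgN | exists a, A = [set b | relW b a]}.

Definition qW (a : PgN) : Wg := exist _ [set b | relW b a] (ex_intro _ a erefl).

Definition openW : set (set Wg) := [set V | openPgN (qW @^-1` V)].

Definition reprW (w : Wg) : PgN := sval (cid (svalP w)).

Definition piW (w : Wg) : Y := (sval (reprW w).1).1.

Definition evg (w : Wg) : C := sval (sval (reprW w).1).2.2 (reprW w).2.

Definition iotag (w : Wg) : (Y * C)%type := (piW w, evg w).

Definition Eg : set (Y * C)%type := range iotag.

Definition Fg (y : Y) : set C := Pbar (g y).

End Construction.

Definition embedding {W : Type} {T : topologicalType} (opW : set (set W)) (f : W -> T) :=
  injective f /\ cts opW open f /\
    forall U, opW U -> exists V : set T, open V /\ f @` U = V `&` range f.

Definition covering_on {T B : topologicalType} (E : set T) (p : T -> B) : Prop :=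
  ({within E, continuous p}) /\
    forall b : B, exists U : set B, open U /\ U b /\
    exists (I : Type) (V : I -> set T),
      (forall i, exists O, open O /\ V i = O `&` E) /\
    (forall i j, i <> j -> V i `&` V j = set0) /\
    E `&` (p @^-1` U) = \bigcup_i V i /\
    (forall i, {in V i &, injective p} /\ p @` V i = U /\
    forall O, open O -> open (p @` (O `&` V i))).

From mathcomp Require Import all_boot all_order all_algebra.
From mathcomp Require Import all_classical all_reals topology normedtype.
From mathcomp Require Import lra.
Import numFieldNormedType.Exports.
Import GRing.Theory Num.Theory Order.TTheory.
Local Open Scope classical_set_scope.

(* Since G acts on EG by a covering action, g lifts locally through
   EG x X -> X//G: near every point of Y there is an open U and a continuous
   y |-> (e y, x y) with g y = [e y, x y].  Over U the bundle W_g is U x N and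
   iota_g [(y, e y, x y), n] = (y, x_n y), so E_g restricted to U x C is the
   union of the graphs ("sheets") of the continuous maps y |-> x_n y, which are
   pairwise disjoint because x y is injective and which exhaust
   {(y, z) | z \in F y}.  A sheet is relatively open in E_g by the vague
   topology: the pairing of F y with a bump function is continuous in y, and a
   bump that sees only the isolated point x_n y0 of F y0 cannot see two points
   of F y for y near y0.  The same device, with a bump around a point z0 not in
   F y0, shows that E_g is closed.  Injectivity of iota_g comes from the
   injectivity of the configurations x. *)

Section SubbaseTopology.
Context {T : Type} (B : set (set T)).

Lemma gen_open_subbase b : B b -> gen_open B b.
Proof.
move=> Bb t bt; exists 1%N, (fun=> b).
by split=> [//|]; split=> [//|s /(_ 0%N erefl)].
Qed.

Lemma gen_openT : gen_open B setT.
Proof. by move=> t _; exists 0%N, (fun=> setT). Qed.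

Lemma gen_open_local U :
  (forall t, U t -> exists W, gen_open B W /\ W t /\ W `<=` U) -> gen_open B U.
Proof.
move=> H t /H[W [oW [/oW[n [b [Bb [bt bW]]]] WU]]].
by exists n, b; split=> //; split=> // s /bW /WU.
Qed.

Lemma gen_openI U V : gen_open B U -> gen_open B V -> gen_open B (U `&` V).
Proof.
move=> oU oV t [/oU[n [b [Bb [bt bU]]]] /oV[m [c [Bc [ct cV]]]]].
pose bc i := if (i < n)%N then b i else c (i - n)%N.
have bcE (P : set T -> Prop) : (forall i, (i < n)%N -> P (b i)) ->
    (forall i, (i < m)%N -> P (c i)) -> forall i, (i < n + m)%N -> P (bc i).
  move=> Pb Pc i; rewrite /bc; case: (ltnP i n) => [lt _|ni lt]; first exact: Pb.
  by apply: Pc; rewrite ltn_subLR.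
exists (n + m)%N, bc; split; first exact: bcE.
split; first exact: (bcE (fun A => A t)).
move=> s Hs; split.
  by apply: bU => i lt; have := Hs i (ltn_addr _ lt); rewrite /bc lt.
apply: cV => i lt; have := Hs (n + i)%N.
by rewrite ltn_add2l lt /bc ltnNge leq_addr addKn; apply.
Qed.

Lemma gen_open_bigcup (I : Type) (F : I -> set T) :
  (forall i, gen_open B (F i)) -> gen_open B (\bigcup_i F i).
Proof.
move=> H t [i _ /(H i)[n [b [Bb [bt bF]]]]].
by exists n, b; split=> //; split=> // s /bF; exists i.
Qed.

Lemma gen_open_bigI (n : nat) (W : nat -> set T) :
  (forall i, (i < n)%N -> gen_open B (W i)) ->
  gen_open B [set s | forall i, (i < n)%N -> W i s].
Proof.
elim: n => [|n IH] oW.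
  by rewrite (_ : [set s | _] = setT); [exact: gen_openT|apply/seteqP].
rewrite (_ : [set s | _] = [set s | forall i, (i < n)%N -> W i s] `&` W n).
  by apply: gen_openI; [apply: IH => i /ltnW/oW|exact: oW].
apply/seteqP; split=> s.
  by move=> Ws; split=> [i /ltnW/Ws//|]; exact: Ws (ltnSn n).
by move=> [Ws Wn] i; rewrite ltnS leq_eqVlt => /predU1P[->|/Ws].
Qed.

End SubbaseTopology.

Lemma gen_open_preimage {A A' : Type} (B : set (set A)) (B' : set (set A'))
    (f : A -> A') : (forall b, B' b -> gen_open B (f @^-1` b)) ->
  forall U, gen_open B' U -> gen_open B (f @^-1` U).
Proof.
move=> fB U oU; apply: gen_open_local => t /oU[n [b [Bb [bt bU]]]].
exists [set s | forall i, (i < n)%N -> (f @^-1` b i) s]; split.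
  by apply: gen_open_bigI => i /Bb/fB.
by split=> // s /bU.
Qed.

Lemma nbhs_bigI_lt {T : topologicalType} (t : T) (n : nat) (W : nat -> set T) :
  (forall i, (i < n)%N -> nbhs t (W i)) ->
  nbhs t [set s | forall i, (i < n)%N -> W i s].
Proof.
move=> tW; have : \forall s \near t, forall i : 'I_n, W i s.
  by apply: filter_forall => i; exact: tW.
by apply: filterS => s Ws i lt; exact: (Ws (Ordinal lt)).
Qed.

Lemma open_setI_preimage {A : topologicalType} {A' : Type} (B' : set (set A'))
    (U0 : set A) (f : A -> A') : open U0 ->
  (forall b, B' b -> open (U0 `&` f @^-1` b)) ->
  forall U, gen_open B' U -> open (U0 `&` f @^-1` U).
Proof.
move=> oU0 fB U oU; rewrite openE => t [U0t /oU[n [b [Bb [bt bU]]]]].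
have : nbhs t (U0 `&` [set s | forall i, (i < n)%N -> b i (f s)]).
  apply: filterI; first exact: open_nbhs_nbhs.
  apply: nbhs_bigI_lt => i lt; apply: (@filterS _ _ _ (U0 `&` f @^-1` b i)).
    by move=> s [].
  by apply: open_nbhs_nbhs; split; [exact: fB (Bb i lt)|split=> //; exact: bt].
by apply: filterS => s [U0s /bU].
Qed.

Lemma nbhs_setX {U V : topologicalType} (p : U * V) (A : set U) (B : set V) O :
  open A -> A p.1 -> open B -> B p.2 -> A `*` B `<=` O -> nbhs p O.
Proof.
move=> oA Ap oB Bp sub; exists (A, B) => //.
by split; apply: open_nbhs_nbhs.
Qed.

Lemma nbhs_setX_open {U V : topologicalType} (p : U * V) O : nbhs p O ->
  exists A B, [/\ open A, A p.1, open B, B p.2 & A `*` B `<=` O].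
Proof.
move=> [[N D] /= [+ +] sub]; rewrite !nbhsE => -[A [oA Ap] AN] [B [oB Bp] BD].
by exists A, B; split=> // q [/AN ? /BD ?]; exact: sub.
Qed.

Lemma open_setX {U V : topologicalType} (A : set U) (B : set V) :
  open A -> open B -> open (A `*` B).
Proof. by move=> oA oB; rewrite openE => p [Ap Bp]; exact: nbhs_setX oA Ap oB Bp _. Qed.

Lemma open_setI_local {T : topologicalType} (E S : set T) : S `<=` E ->
  (forall p, S p -> exists O, [/\ open O, O p & O `&` E `<=` S]) ->
  exists O, open O /\ O `&` E = S.
Proof.
move=> SE locS; exists (\bigcup_(O in [set O | open O /\ O `&` E `<=` S]) O).
split; first by apply: bigcup_open => O [].
apply/seteqP; split=> [p [[O [_ OS] Op] Ep]|p Sp]; first exact: OS.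
by have [O [oO Op OS]] := locS p Sp; split; [exists O|exact: SE].
Qed.

Lemma autN_eq (s t : autN) : aut_fun s =1 aut_fun t -> s = t.
Proof.
case: s t => f fi fK fiK [h hi hK hiK] /= /funext ef; subst h.
have ei : fi = hi by apply: funext => n; rewrite -[in RHS](fiK n) hK.
by subst hi; congr AutN; exact: Prop_irrelevance.
Qed.

Definition autV (s : autN) : autN :=
  @AutN (aut_inv s) (aut_fun s) (aut_invK s) (aut_funK s).

Lemma aut_compV s : aut_comp s (autV s) = aut_id.
Proof. by apply: autN_eq => n /=; rewrite aut_invK. Qed.

Section EquivalenceClasses.
Variables (T : Type) (r : T -> T -> Prop).
Hypotheses (r_refl : forall a, r a a) (r_sym : forall a b, r a b -> r b a)
  (r_trans : forall a b c, r a b -> r b c -> r a c).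

Definition eqclass_of a : {A : set T | exists a, A = [set b | r b a]} :=
  exist _ [set b | r b a] (ex_intro _ a erefl).

Lemma eqclass_ofP a b : eqclass_of a = eqclass_of b <-> r a b.
Proof.
split=> [/(congr1 sval)/= eab|rab].
  by have : [set c | r c a] a := r_refl a; rewrite eab.
by apply: eq_exist; apply/seteqP; split=> c rc; apply: r_trans rc _; last exact: r_sym.
Qed.

Lemma eqclass_of_repr (A : {A : set T | exists a, A = [set b | r b a]}) :
  eqclass_of (sval (cid (svalP A))) = A.
Proof. by case: cid => a e; case: A e => A h /= e; apply: eq_exist; rewrite e. Qed.

End EquivalenceClasses.

Section ConfigurationSpace.
Context (R : realType).
Local Notation Xsp := (Xsp R).

Lemma Xsp_inj (x y : Xsp) : sval x = sval y -> x = y.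
Proof. by case: x y => x hx [y hy] /= e; exact: eq_exist. Qed.

Lemma Xset_comp_aut (s : autN) (x : Xsp) : Xset R (sval x \o aut_fun s).
Proof.
case: x => x [xinj xfin]; split=> [i j /xinj /(can_inj (aut_funK s))//|r].
rewrite (_ : [set j | _] = aut_inv s @` [set k | (cmod (x k) <= r)%R]).
  exact/finite_image/xfin.
apply/seteqP; split=> j /=; last by move=> [k kr <-]; rewrite aut_invK.
by move=> jr; exists (aut_fun s j); rewrite ?aut_funK.
Qed.

Definition xact (s : autN) (x : Xsp) : Xsp := exist _ _ (Xset_comp_aut s x).

Lemma Pmap_xact s x : Pmap R (xact s x) = Pmap R x.
Proof.
apply/seteqP; split=> z [j _ <-]; first by exists (aut_fun s j).
by exists (aut_inv s j) => //=; rewrite aut_invK.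
Qed.

End ConfigurationSpace.

Section OrbitSpace.
Context {R : realType} {EG : topologicalType} {act : EG -> autN -> EG}
  (Hact : right_action EG act).
Local Notation relEX := (relEX R EG act).
Local Notation qXG := (qXG R EG act).

Lemma act_id e : act e aut_id = e.
Proof. by case: Hact. Qed.

Lemma act_comp e s t : act (act e s) t = act e (aut_comp s t).
Proof. by case: Hact => _ []. Qed.

Lemma actK e s : act (act e s) (autV s) = e.
Proof. by rewrite act_comp aut_compV act_id. Qed.

Lemma relEX_refl p : relEX p p.
Proof. by exists aut_id; rewrite act_id. Qed.

Lemma relEX_sym p q : relEX p q -> relEX q p.
Proof.
move=> [s [e1 e]]; exists (autV s); rewrite e1 actK; split=> //.
by rewrite /actX e; apply: funext => n /=; rewrite aut_invK.
Qed.

Lemma relEX_trans p q r : relEX p q -> relEX q r -> relEX p r.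
Proof.
move=> [s [e1 e]] [t [f1 f]]; exists (aut_comp t s).
by rewrite e1 f1 act_comp /actX e f.
Qed.

Lemma qXG_eqP p q : qXG p = qXG q <-> relEX p q.
Proof. exact: eqclass_ofP relEX_refl relEX_sym relEX_trans p q. Qed.

Lemma relEXP p q : relEX p q <-> exists s, p = (act q.1 s, xact R s q.2).
Proof.
split=> [[s [e1 e2]]|[s ->]]; last by exists s.
by exists s; case: p e1 e2 => e x /= -> e2; congr pair; exact: Xsp_inj.
Qed.

Lemma reprXGK a : qXG (reprXG R EG act a) = a.
Proof. exact: eqclass_of_repr. Qed.

Lemma Pbar_qXG p : Pbar R EG act (qXG p) = Pmap R p.2.
Proof.
rewrite /Pbar; have /qXG_eqP/relEXP[s ->] := reprXGK (qXG p).
exact: Pmap_xact.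
Qed.

End OrbitSpace.

Section AssociatedBundle.
Context {R : realType} {EG : topologicalType} {act : EG -> autN -> EG}
  (Hact : right_action EG act) {Y : topologicalType} {g : Y -> XG R EG act}.
Local Notation qXG := (qXG R EG act).
Local Notation relW := (relW R EG act Y g).
Local Notation qW := (qW R EG act Y g).
Local Notation reprW := (reprW R EG act Y g).
Local Notation iotag := (iotag R EG act Y g).

Lemma relW_refl a : relW a a.
Proof. by exists aut_id; rewrite (act_id Hact). Qed.

Lemma relW_sym a b : relW a b -> relW b a.
Proof.
move=> [s [e1 [e2 [e e4]]]]; exists (autV s); rewrite e1 e2 e4 (actK Hact) /= aut_funK.
by do !split; rewrite /actX e; apply: funext => n /=; rewrite aut_invK.
Qed.

Lemma relW_trans a b c : relW a b -> relW b c -> relW a c.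
Proof.
move=> [s [e1 [e2 [e e4]]]] [t [f1 [f2 [f f4]]]]; exists (aut_comp t s).
by rewrite e1 f1 e2 f2 f4 e4 (act_comp Hact) /actX e f.
Qed.

Lemma qW_eqP a b : qW a = qW b <-> relW a b.
Proof. exact: eqclass_ofP relW_refl relW_sym relW_trans a b. Qed.

Lemma reprWK w : qW (reprW w) = w.
Proof. exact: eqclass_of_repr. Qed.

Lemma iotag_qW a : iotag (qW a) = ((sval a.1).1, sval (sval a.1).2.2 a.2).
Proof.
have /qW_eqP[s [e1 [_ [e3 e4]]]] := reprWK (qW a).
by rewrite /iotag /piW /evg e1 e3 e4.
Qed.

Lemma iotag_inj : injective iotag.
Proof.
move=> w1 w2; rewrite -(reprWK w1) -(reprWK w2) !iotag_qW.
case: (reprW w1) (reprW w2) => [[[y1 p1] h1] n1] [[[y2 p2] h2] n2] /= [ey ex].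
subst y2; apply/qW_eqP.
have /(qXG_eqP Hact)[s [e1 e2]] : qXG p1 = qXG p2 by rewrite -h1 -h2.
exists s; do !split=> //=; move: ex; rewrite e2 /=.
by case: (svalP p2.2) => xinj _ /xinj.
Qed.

Lemma Eg_Fg : Eg R EG act Y g = [set yz | Fg R EG act Y g yz.1 yz.2].
Proof.
apply/seteqP; split=> [_ [w _ <-]|[y z] /= [m _ <-]].
  rewrite -(reprWK w) iotag_qW; case: (reprW w) => [[[y p] h] n] /=.
  by rewrite /Fg h (Pbar_qXG Hact); exists n.
have h : g y = qXG (reprXG R EG act (g y)) by rewrite reprXGK.
by exists (qW (exist _ (y, _) h, m)); rewrite ?iotag_qW.
Qed.

End AssociatedBundle.

Section QuotientTopology.
Context {R : realType} {EG : topologicalType} {act : EG -> autN -> EG}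
  (Hact : right_action EG act) {Y : topologicalType} {g : Y -> XG R EG act}.
Local Notation C := (CC R).
Local Notation Xsp := (Xsp R).
Local Notation EX := (EX R EG).
Local Notation qXG := (qXG R EG act).
Local Notation openX := (openX R).
Local Notation openEX := (openEX R EG).
Local Notation openXG := (openXG R EG act).
Local Notation Pg := (Pg R EG act Y g).
Local Notation openPg := (openPg R EG act Y g).
Local Notation openPgN := (openPgN R EG act Y g).

Lemma openX_coord j (U : set C) : open U -> openX [set x | U (sval x j)].
Proof. by move=> oU; apply: gen_open_subbase; left; exists j, U. Qed.

Lemma openX_vague W : vague_subbase R W -> openX [set x | W (Pmap R x)].
Proof. by move=> vW; apply: gen_open_subbase; right; exists W. Qed.

Lemma openX_xact s U : openX U -> openX (xact R s @^-1` U).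
Proof.
apply: gen_open_preimage => _ [[j [V [oV ->]]]|[W [vW ->]]].
  exact: (openX_coord (aut_fun s j)).
by rewrite /preimage /=; under eq_fun do rewrite Pmap_xact; exact: openX_vague.
Qed.

Lemma openEX_fst (U : set EG) : open U -> openEX [set p | U p.1].
Proof. by move=> oU; apply: gen_open_subbase; left; exists U. Qed.

Lemma openEX_snd (V : set Xsp) : openX V -> openEX [set p | V p.2].
Proof. by move=> oV; apply: gen_open_subbase; right; exists V. Qed.

Lemma openEX_act s O :
  openEX O -> openEX ((fun p : EX => (act p.1 s, xact R s p.2)) @^-1` O).
Proof.
apply: gen_open_preimage => _ [[U [oU ->]]|[V [oV ->]]].
  apply: (openEX_fst (act^~ s @^-1` U)); apply: open_comp oU => e _.
  by case: Hact => _ [_ /(_ s)].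
exact: (openEX_snd (xact R s @^-1` V)) (openX_xact _ _ oV).
Qed.

Lemma openXG_image O : openEX O -> openXG (qXG @` O).
Proof.
move=> oO; rewrite /openXG /= (_ : qXG @^-1` _ =
    \bigcup_s ((fun p : EX => (act p.1 s, xact R s p.2)) @^-1` O)).
  by apply: gen_open_bigcup => s; exact: openEX_act.
apply/seteqP; split=> [p [o Oo /(qXG_eqP Hact)/relEXP[s eo]]|p [s _ Os]].
  by exists s; rewrite // /preimage /= -eo.
by exists (act p.1 s, xact R s p.2) => //; apply/(qXG_eqP Hact)/relEXP; exists s.
Qed.

Lemma openXG_Pbar V : vague_subbase R V -> openXG [set a | V (Pbar R EG act a)].
Proof.
move=> vV; rewrite /openXG /preimage /=; under eq_fun do rewrite (Pbar_qXG Hact).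
exact: (openEX_snd _ (openX_vague _ vV)).
Qed.

Lemma openPg_fst (U : set Y) : open U -> openPg [set p | U (sval p).1].
Proof. by move=> oU; apply: gen_open_subbase; left; exists U. Qed.

Lemma openPg_snd (O : set EX) : openEX O -> openPg [set p | O (sval p).2].
Proof. by move=> oO; apply: gen_open_subbase; right; exists O. Qed.

Lemma openPgN_fst (O : set Pg) : openPg O -> openPgN [set a | O a.1].
Proof. by move=> oO; apply: gen_open_subbase; left; exists O. Qed.

Lemma openPgN_snd m : openPgN [set a | a.2 = m].
Proof. by apply: gen_open_subbase; right; exists m. Qed.

End QuotientTopology.

Section LocalSections.
Context {R : realType} {EG : topologicalType} {act : EG -> autN -> EG}
  (Hact : right_action EG act) (Hcov : covering_action EG act)
  {Y : topologicalType} {g : Y -> XG R EG act}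
  (Hg : cts open (openXG R EG act) g).
Local Notation EX := (EX R EG).
Local Notation qXG := (qXG R EG act).
Local Notation Pg := (Pg R EG act Y g).
Local Notation openPg := (openPg R EG act Y g).

Definition local_section (U : set Y) (s : Y -> Pg) : Prop :=
  [/\ open U, forall y, U y -> (sval (s y)).1 = y &
      forall O, openPg O -> open (U `&` s @^-1` O)].

Lemma qXG_inj_on_slice (V : set EG) :
  (forall (s : autN) e, V e -> V (act e s) -> aut_fun s =1 id) ->
  forall o o' : EX, V o.1 -> V o'.1 -> qXG o = qXG o' -> o = o'.
Proof.
move=> freeV o o' Vo Vo' /(qXG_eqP Hact)/relEXP[s eo].
have /autN_eq sid : aut_fun s =1 aut_fun aut_id.
  by apply: (freeV s o'.1 Vo'); move: Vo; rewrite eo.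
rewrite eo sid (act_id Hact); case: o' {Vo' eo} => e' x' /=; congr pair.
exact: Xsp_inj.
Qed.

(* [Hcov] gives a slice [V] of [EG] on which [qXG] is injective, so over
   [U := g @^-1` (qXG @` (V x X))] each [g y] has a unique lift into the slice;
   the lift is continuous because [qXG] is an open map. *)
Lemma local_section_exists y0 : exists U s, U y0 /\ local_section U s.
Proof.
pose r0 := reprXG R EG act (g y0).
have [V [oV [Vr0 freeV]]] := Hcov r0.1.
pose O0 := [set p : EX | V p.1].
pose U := g @^-1` (qXG @` O0).
have p0 : g y0 = qXG r0 by rewrite reprXGK.
pose s y : Pg := match pselect (U y) with
  | left h => let o := cid2 h in exist _ (y, s2val o) (esym (s2valP' o))
  | right _ => exist _ (y0, r0) p0 end.
have sU y : U y -> (sval (s y)).1 = y /\ O0 (sval (s y)).2.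
  by rewrite /s; case: pselect => // h _; split=> //; exact: s2valP.
have oU : open U by exact/Hg/openXG_image/openEX_fst.
exists U, s; split; first by exists r0.
split=> // [y /sU[]//|].
apply: open_setI_preimage => // _ [[A [oA ->]]|[O [oO ->]]].
  rewrite (_ : _ `&` _ = U `&` A); first exact: openI.
  by apply/seteqP; split=> y [Uy]; rewrite /preimage /= (sU y Uy).1.
rewrite (_ : _ `&` _ = g @^-1` (qXG @` (O `&` O0))).
  by apply/Hg/openXG_image/gen_openI => //; exact: openEX_fst.
apply/seteqP; split=> y.
  move=> [Uy Oy]; have [sy O0y] := sU y Uy; exists (sval (s y)).2 => //.
  by rewrite -(svalP (s y)) sy.
move=> [o [Oo O0o] eo]; have Uy : U y by exists o.
have [sy O0y] := sU y Uy; split=> //; rewrite /preimage /=.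
have -> // : (sval (s y)).2 = o.
by apply: qXG_inj_on_slice freeV _ _ O0y O0o _; rewrite eo -(svalP (s y)) sy.
Qed.

End LocalSections.

Section OverLocalSection.
Context {R : realType} {EG : topologicalType} {act : EG -> autN -> EG}
  (Hact : right_action EG act) {Y : topologicalType} {g : Y -> XG R EG act}.
Local Notation C := (CC R).
Local Notation Pg := (Pg R EG act Y g).
Local Notation Wg := (Wg R EG act Y g).
Local Notation qW := (qW R EG act Y g).
Local Notation piW := (piW R EG act Y g).
Local Notation iotag := (iotag R EG act Y g).
Local Notation Eg := (Eg R EG act Y g).
Local Notation Fg := (Fg R EG act Y g).
Context {U : set Y} {s : Y -> Pg} (Us : local_section U s).
Local Notation xs y := (sval (sval (s y)).2.2).

Lemma local_section_fst {y} : U y -> (sval (s y)).1 = y.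
Proof. by case: Us => _ + _; apply. Qed.

Lemma open_local_section O :
  openPg R EG act Y g O -> open (U `&` s @^-1` O).
Proof. by case: Us => _ _; apply. Qed.

Lemma Fg_local {y} : U y -> Fg y = range (xs y).
Proof.
move=> Uy; rewrite /Fg -{1}(local_section_fst Uy) (svalP (s y)).
exact: Pbar_qXG.
Qed.

Lemma Eg_local y z : U y -> Eg (y, z) <-> exists n, z = xs y n.
Proof.
move=> Uy; rewrite (Eg_Fg Hact) /= (Fg_local Uy).
by split=> [[n _ <-]|[n ->]]; exists n.
Qed.

Lemma iotag_local y n : U y -> iotag (qW (s y, n)) = (y, xs y n).
Proof. by move=> Uy; rewrite (iotag_qW Hact) /= (local_section_fst Uy). Qed.

Lemma Wg_local w : U (piW w) -> exists m, w = qW (s (piW w), m).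
Proof.
move=> Uw; have /(qXG_eqP Hact)[t [e1 e2]] :
    qXG R EG act (sval (reprW R EG act Y g w).1).2 = qXG R EG act (sval (s (piW w))).2.
  by rewrite -!(svalP (_ : Pg)) (local_section_fst Uw).
exists (aut_fun t (reprW R EG act Y g w).2).
by rewrite -{1}(reprWK w); apply/(qW_eqP Hact); exists t; rewrite (local_section_fst Uw).
Qed.

Lemma open_local_coord n (D : set C) :
  open D -> open (U `&` [set y | D (xs y n)]).
Proof.
by move=> oD; exact: open_local_section _ (openPg_snd _ (openEX_snd _ (openX_coord n D oD))).
Qed.

Lemma open_local_vague f (V : set R) : testfun R f -> open V ->
  open (U `&` [set y | V (vpair R f (range (xs y)))]).
Proof.
move=> tf oV; have vV : vague_subbase R [set S | V (vpair R f S)] by exists f, V.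
exact: open_local_section _ (openPg_snd _ (openEX_snd _ (openX_vague _ vV))).
Qed.

Lemma open_local_qW (V : set Wg) : openW R EG act Y g V ->
  forall n, open (U `&` [set y | V (qW (s y, n))]).
Proof.
have [oU _ _] := Us.
move=> oV n; apply: (open_setI_preimage _ _ (fun y => (s y, n)) oU) oV.
move=> _ [[O [oO ->]]|[m ->]]; first exact: open_local_section.
have [->|nm] := eqVneq n m.
  by rewrite (_ : _ `&` _ = U) //; apply/seteqP; split=> y // [].
rewrite (_ : _ `&` _ = set0); first exact: open0.
by apply/seteqP; split=> // y [_ /= enm]; move: nm; rewrite enm eqxx.
Qed.

End OverLocalSection.

Section PlaneAnalysis.
Context {R : realType}.
Local Open Scope ring_scope.
Local Notation C := (CC R).

Lemma cmod_le_norm (z : C) : cmod z <= 2 * `|z|.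
Proof.
have z1 : `|z.1| <= `|z| by rewrite le_max lexx.
have z2 : `|z.2| <= `|z| by rewrite le_max lexx orbT.
have sqr_le a : `|a| <= `|z| -> a ^+ 2 <= `|z| ^+ 2.
  by move=> az; rewrite -(real_normK (num_real a)) lerXn2r ?nnegrE ?normr_ge0.
have : z.1 ^+ 2 + z.2 ^+ 2 <= (2 * `|z|) ^+ 2.
  rewrite exprMn; have := sqr_le _ z1; have := sqr_le _ z2.
  have := sqr_ge0 `|z|; lra.
by move/ler_wsqrtr; rewrite sqrtr_sqr ger0_norm // mulr_ge0 // normr_ge0.
Qed.

Lemma continuous_dist (c : C) : continuous (fun z : C => `|z - c|).
Proof.
by move=> z; apply: cvg_norm; apply: cvgB; [exact: cvg_id|exact: cvg_cst].
Qed.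

Lemma compact_dist_le (c : C) (e : R) : compact [set z : C | `|z - c| <= e].
Proof.
rewrite (_ : [set z | _] = `[c.1 - e, c.1 + e] `*` `[c.2 - e, c.2 + e]).
  by apply: compact_setX; exact: segment_compact.
by apply/seteqP; split=> z; rewrite /= ge_max !in_itv /= -!ler_distl => /andP.
Qed.

Lemma open_dist_lt (c : C) (e : R) : open [set z : C | `|z - c| < e].
Proof.
apply: (@open_comp _ _ (fun z : C => `|z - c|) [set r | r < e]); last exact: open_lt.
by move=> z _; exact: continuous_dist.
Qed.

Definition bump (rho : R) (c z : C) : R :=
  Num.min 1 (Num.max 0 (2 - `|z - c| / rho)).

Lemma bump_ge0 rho c z : 0 <= bump rho c z.
Proof. by rewrite /bump le_min ler01 le_max lexx. Qed.

Lemma bump_le1 rho c z : bump rho c z <= 1.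
Proof. by rewrite /bump ge_min lexx. Qed.

Lemma bump1 rho c z : 0 < rho -> `|z - c| <= rho -> bump rho c z = 1.
Proof.
move=> rho0 zc; apply/min_idPl; rewrite le_max lerBrDl -lerBrDr.
by rewrite [2 - 1](_ : _ = 1 :> R) ?ler_pdivrMr ?mul1r ?zc ?orbT //; lra.
Qed.

Lemma bump_neq0 rho c z : 0 < rho -> bump rho c z != 0 -> `|z - c| < 2 * rho.
Proof.
move=> rho0; apply: contraNT; rewrite -leNgt => zc.
rewrite /bump (_ : Num.max _ _ = 0) ?/Num.min ?ltr10 //.
by apply/max_idPl; rewrite subr_le0 ler_pdivlMr.
Qed.

Lemma bump_continuous rho c : continuous (bump rho c).
Proof.
have -> : bump rho c = (fun=> 1 : R^o) \min ((fun=> 0 : R^o) \max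
    (fun z : C => 2 - `|z - c| / rho : R^o)) by [].
move=> z; apply: continuous_min; first exact: cvg_cst.
apply: continuous_max; first exact: cvg_cst.
apply: cvgB; first exact: cvg_cst.
by apply: cvgM; [exact: continuous_dist|exact: cvg_cst].
Qed.

Lemma bump_testfun rho c : 0 < rho -> testfun R (bump rho c).
Proof.
move=> rho0; split; first exact: bump_continuous.
apply: (subclosed_compact _ (compact_dist_le c (2 * rho))); first exact: closed_closure.
have /closure_id -> : closed [set z : C | `|z - c| <= 2 * rho].
  apply: (@preimage_closed _ _ (fun z : C => `|z - c|) [set r | r <= 2 * rho]).
    by move=> z _; exact: continuous_dist.
  exact: closed_le.
by apply: closureS => z /(bump_neq0 _ _ _ rho0)/ltW.
Qed.

End PlaneAnalysis.

Section LocallyFiniteConfigurations.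
Context {R : realType}.
Local Open Scope ring_scope.
Local Notation C := (CC R).
Local Notation Xsp := (Xsp R).

Lemma finite_norm_le (x : Xsp) (K : R) : finite_set [set j | `|sval x j| <= K].
Proof.
case: x => x [_ xfin] /=; apply: sub_finite_set (xfin (2 * K)) => j /= xjK.
by rewrite (le_trans (cmod_le_norm _)) // ler_pM2l.
Qed.

Lemma Xsp_separated (x : Xsp) (c : C) :
  exists2 r : R, 0 < r & forall j, sval x j <> c -> r <= `|sval x j - c|.
Proof.
have /finite_fsetP[J eJ] := finite_norm_le x (`|c| + 1).
have [r [r0 r1 Jr]] : exists r : R, [/\ 0 < r, r <= 1 &
    forall j, j \in finmap.enum_fset J -> sval x j <> c -> r <= `|sval x j - c|].
  elim: (finmap.enum_fset J) => [|j js [r [r0 r1 jsr]]]; first by exists 1.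
  have [xjc|xjc] := eqVneq (sval x j) c.
    by exists r; split=> // i; rewrite inE => /predU1P[->|/jsr//].
  exists (Num.min r `|sval x j - c|); split.
  - by rewrite lt_min r0 normr_gt0 subr_eq0.
  - by rewrite ge_min r1.
  - move=> i; rewrite inE => /predU1P[->|/jsr ir /ir]; first by rewrite ge_min lexx orbT.
    by rewrite ge_min => ->.
exists r => // j xjc; have [jJ|jJ] := boolP (j \in finmap.enum_fset J); first exact: Jr.
rewrite leNgt; apply/negP => ltr.
have : [set j | `|sval x j| <= `|c| + 1] j.
  rewrite /= -[sval x j](subrK c) (le_trans (ler_normD _ _)) // addrC lerD2l.
  exact: le_trans (ltW ltr) r1.
by rewrite eJ /= (negbTE jJ).
Qed.

Definition vsupp (f : C -> R) (S : set C) := S `&` f @^-1` [set~ 0].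

Lemma vpair_ge_point (f : C -> R) (S : set C) z :
  finite_set (vsupp f S) -> (forall w, 0 <= f w) -> S z -> f z <= vpair R f S.
Proof.
move=> fin f0 Sz; rewrite /vpair fsbig_supp.
have [->|fz] := eqVneq (f z) 0; first exact: fsumr_ge0.
by rewrite (fsbigD1 z) //= ?lerDl ?fsumr_ge0 //; split=> //; apply/eqP.
Qed.

Lemma vpair_ge_pair (f : C -> R) (S : set C) z1 z2 :
  finite_set (vsupp f S) -> (forall w, 0 <= f w) -> S z1 -> S z2 -> z1 <> z2 ->
  f z1 != 0 -> f z2 != 0 -> f z1 + f z2 <= vpair R f S.
Proof.
move=> fin f0 S1 S2 z12 f1 f2; rewrite /vpair fsbig_supp.
rewrite (fsbigD1 z1) //=; last by split=> //; apply/eqP.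
rewrite (fsbigD1 z2) //=; first by rewrite lerD2l lerDl fsumr_ge0.
  exact: finite_setD.
by split; [split=> //; apply/eqP|move=> /= e; apply: z12].
Qed.

Lemma vpair_eq0 (f : C -> R) (S : set C) : (forall z, S z -> f z = 0) -> vpair R f S = 0.
Proof. by move=> fS; rewrite /vpair fsbig1. Qed.

Lemma vpair_le_point (f : C -> R) (S : set C) c :
  (forall z, S z -> f z != 0 -> z = c) -> f c <= 1 -> vpair R f S <= 1.
Proof.
move=> fc fc1; rewrite /vpair fsbig_supp.
have [Sc|Sc] := pselect (vsupp f S c).
  rewrite (_ : _ `&` _ = [set c]) ?fsbig_set1 //.
  by apply/seteqP; split=> [z [Sz /eqP/(fc z Sz)]|z ->].
rewrite (_ : _ `&` _ = set0) ?fsbig_set0 //.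
apply/seteqP; split=> // z [Sz fz]; apply: Sc.
by rewrite -(fc z Sz (introN eqP fz)).
Qed.

Lemma finite_vsupp_bump (x : Xsp) rho c : 0 < rho ->
  finite_set (vsupp (bump rho c) (range (sval x))).
Proof.
move=> rho0; rewrite (_ : vsupp _ _ = sval x @` [set j | bump rho c (sval x j) != 0]).
  apply/finite_image; apply: sub_finite_set (finite_norm_le x (`|c| + 2 * rho)).
  move=> j /(bump_neq0 _ _ _ rho0)/ltW xjc /=.
  by rewrite -[sval x j](subrK c) (le_trans (ler_normD _ _)) // addrC lerD2l.
by apply/seteqP; split=> [z [[j _ <-] /eqP]|_ [j /eqP fj <-]]; [exists j|split=> //; exists j].
Qed.

Lemma vpair_bump_pair (x : Xsp) rho c i j : 0 < rho -> i <> j ->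
  `|sval x i - c| <= rho -> `|sval x j - c| <= rho ->
  2 <= vpair R (bump rho c) (range (sval x)).
Proof.
move=> rho0 ij xic xjc; have fi := bump1 _ _ _ rho0 xic; have fj := bump1 _ _ _ rho0 xjc.
have <- : bump rho c (sval x i) + bump rho c (sval x j) = 2 by rewrite fi fj.
apply: vpair_ge_pair; first exact: finite_vsupp_bump.
- exact: bump_ge0.
- by exists i.
- by exists j.
- by case: (svalP x) => xinj _ /xinj.
- by rewrite fi oner_eq0.
- by rewrite fj oner_eq0.
Qed.

Lemma vpair_bump_isolated (x : Xsp) r n : 0 < r ->
  (forall j, sval x j <> sval x n -> r <= `|sval x j - sval x n|) ->
  vpair R (bump (r / 2) (sval x n)) (range (sval x)) <= 1.
Proof.
move=> r0 sep; have r2 : 0 < r / 2 by rewrite divr_gt0.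
apply: vpair_le_point (bump_le1 _ _ _) => _ [j _ <-] fj; apply: contrapT => xjn.
by have := bump_neq0 _ _ _ r2 fj; have := sep j xjn; lra.
Qed.

Lemma vpair_bump_far (x : Xsp) r c : 0 < r -> (forall j, r <= `|sval x j - c|) ->
  vpair R (bump (r / 2) c) (range (sval x)) = 0.
Proof.
move=> r0 far; have r2 : 0 < r / 2 by rewrite divr_gt0.
apply: vpair_eq0 => _ [j _ <-]; apply/eqP; apply: contraT => fj.
by have := bump_neq0 _ _ _ r2 fj; have := far j; lra.
Qed.

End LocallyFiniteConfigurations.

Section Sheets.
Context {R : realType} {EG : topologicalType} {act : EG -> autN -> EG}
  (Hact : right_action EG act) {Y : topologicalType} {g : Y -> XG R EG act}.
Local Open Scope ring_scope.
Local Notation Eg := (Eg R EG act Y g).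
Context {U : set Y} {s : Y -> Pg R EG act Y g} (Us : local_section U s).
Local Notation xs y := (sval (sval (s y)).2.2).
Local Notation sheet n := [set p : Y * CC R | U p.1 /\ p.2 = xs p.1 n].

Lemma sheet_open n : exists O, open O /\ O `&` Eg = sheet n.
Proof.
apply: open_setI_local => [[y z] /= [Uy ->]|[y0 z0] /= [Uy0 ->]].
  by apply/(Eg_local Hact Us _ _ Uy); exists n.
set c := xs y0 n; have [r r0 sep] := Xsp_separated (sval (s y0)).2.2 c.
have r2 : 0 < r / 2 by rewrite divr_gt0.
have r4 : 0 < r / 4 by rewrite divr_gt0.
pose f := bump (r / 2) c.
exists (((U `&` [set y | `|xs y n - c| < r / 4]) `&`
         (U `&` [set y | vpair R f (range (xs y)) < 2])) `*` [set z | `|z - c| < r / 4]).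
split.
- apply: open_setX; last exact: open_dist_lt.
  apply: openI; first exact: open_local_coord Us n _ (open_dist_lt c (r / 4)).
  exact: open_local_vague Us f _ (bump_testfun _ _ r2) (@open_lt _ 2).
- rewrite /= subrr normr0; split=> //; split=> //; split=> //.
  by apply: le_lt_trans (vpair_bump_isolated _ _ _ r0 sep) _; lra.
move=> [y z] [[[[/= Uy yc] [_ v2]] zc] /(Eg_local Hact Us _ _ Uy)[m ez]].
split=> //=; rewrite ez; have [->//|/eqP mn] := eqVneq m n.
have ymc : `|xs y m - c| <= r / 2 by rewrite -ez; move: zc => /=; lra.
have ync : `|xs y n - c| <= r / 2 by move: yc => /=; lra.
have := vpair_bump_pair (sval (s y)).2.2 (r / 2) c m n r2 mn ymc ync.
by move: v2 => /= v2 v2'; exfalso; lra.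
Qed.

Lemma sheets_disjoint i j : i <> j -> sheet i `&` sheet j = set0.
Proof.
move=> ij; apply/seteqP; split=> // -[y z] [[_ /= ->] [_ e]]; apply: ij.
by case: (svalP (sval (s y)).2.2) => xinj _; exact: xinj.
Qed.

Lemma Eg_fst_preimage : Eg `&` fst @^-1` U = \bigcup_n sheet n.
Proof.
apply/seteqP; split=> [[y z] [Eyz /= Uy]|[y z] [n _ [/= Uy ->]]].
  by have [n ->] := (Eg_local Hact Us y z Uy).1 Eyz; exists n.
by split=> //; apply/(Eg_local Hact Us y _ Uy); exists n.
Qed.

Lemma open_fst_sheet n O : open O -> open (fst @` (O `&` sheet n)).
Proof.
have [oU _ _] := Us.
move=> oO; rewrite openE => _ [[y z] [Oyz [Uy /= ez]] <-].
have [A [B [oA Ay oB Bz AB]]] := nbhs_setX_open _ _ (open_nbhs_nbhs (conj oO Oyz)).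
have oN : open (A `&` (U `&` [set y' | B (xs y' n)])).
  exact: openI oA (open_local_coord Us n B oB).
apply: (filterS _ (open_nbhs_nbhs (conj oN _))).
  by move=> y' [Ay' [Uy' By']]; exists (y', xs y' n) => //; split; [exact: AB|split].
by split=> //; split=> //; move: Bz; rewrite /= ez.
Qed.

End Sheets.

Section EmbeddedCovering.
Context {R : realType} {EG : topologicalType} {act : EG -> autN -> EG}
  (Hact : right_action EG act) (Hcov : covering_action EG act)
  {Y : topologicalType} {g : Y -> XG R EG act}
  (Hg : cts open (openXG R EG act) g).
Local Open Scope ring_scope.
Local Notation C := (CC R).
Local Notation Wg := (Wg R EG act Y g).
Local Notation openW := (openW R EG act Y g).
Local Notation qW := (qW R EG act Y g).
Local Notation piW := (piW R EG act Y g).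
Local Notation iotag := (iotag R EG act Y g).
Local Notation Eg := (Eg R EG act Y g).
Local Notation Fg := (Fg R EG act Y g).

Lemma closed_Eg : closed Eg.
Proof.
rewrite (Eg_Fg Hact) -openC openE => -[y0 z0] /= Fz0.
pose x0 := (reprXG R EG act (g y0)).2.
have [r r0 sep] := Xsp_separated x0 z0.
have far j : r <= `|sval x0 j - z0| by apply: sep => xz; apply: Fz0; exists j.
pose f := bump (r / 2) z0.
have vV : vague_subbase R [set S | vpair R f S < 1].
  by exists f, [set t | t < 1]; split; [apply: bump_testfun; lra|split; first exact: open_lt].
apply: (nbhs_setX _ _ _ _ (Hg _ (openXG_Pbar Hact _ vV)) _ (open_dist_lt z0 (r / 2))).
- by rewrite /preimage /= /Pbar -/x0 (vpair_bump_far _ _ _ r0 far) ltr01.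
- by rewrite /= subrr normr0; lra.
move=> [y z] [/= v1 zr] /= Fz.
have : 1 <= vpair R f (Pbar R EG act (g y)).
  have <- : f z = 1 by apply: bump1; lra.
  apply: vpair_ge_point => //; last exact: bump_ge0.
  by apply: finite_vsupp_bump; lra.
by move: v1 => /=; lra.
Qed.

Lemma cts_iotag : cts openW open iotag.
Proof.
move=> V oV; apply: gen_open_local => -[p n]; rewrite /preimage /= (iotag_qW Hact) => Vpn.
have [A [B [oA Ap oB Bp AB]]] := nbhs_setX_open _ _ (open_nbhs_nbhs (conj oV Vpn)).
exists ([set a | A (sval a.1).1] `&` [set a | B (sval (sval a.1).2.2 n)] `&` [set a | a.2 = n]).
split.
  apply: gen_openI; last exact: openPgN_snd.
  apply: gen_openI; first exact: openPgN_fst _ (openPg_fst _ oA).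
  exact: openPgN_fst _ (openPg_snd _ (openEX_snd _ (openX_coord n B oB))).
split=> // -[q m] [[Aq Bq] /= mn]; rewrite /preimage /= (iotag_qW Hact) mn.
exact: AB.
Qed.

(* Near [iotag w], [Eg] is the [m]-th sheet of a local section [s], and the
   sheet point over [y] is [iotag (qW (s y, m))], which comes from [U] under the
   open condition [U (qW (s y, m))] on [y]. *)
Lemma open_image_iotag (U : set Wg) : openW U ->
  exists V, open V /\ iotag @` U = V `&` range iotag.
Proof.
move=> oU; have [V [oV VE]] : exists V, open V /\ V `&` Eg = iotag @` U.
  apply: open_setI_local => [_ [w _ <-]|_ [w Uw <-]]; first by exists w.
  have [U' [s [Uw' Us]]] := local_section_exists Hact Hcov Hg (piW w).
  have [m ew] := Wg_local Hact Us w Uw'.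
  have [O [oO OE]] := sheet_open Hact Us m.
  have iw : iotag w = (piW w, sval (sval (s (piW w))).2.2 m).
    by rewrite {1}ew (iotag_local Hact Us).
  exists (O `&` ((U' `&` [set y | U (qW (s y, m))]) `*` setT)); split.
  - by apply: openI => //; apply: open_setX; [exact: open_local_qW|exact: openT].
  - have [Ow _] : (O `&` Eg) (iotag w) by rewrite OE iw.
    by split=> //; rewrite iw; split=> //; split=> //=; rewrite -ew.
  move=> [y z] [[Oyz [[Uy Uyq] _]] Eyz].
  have : (O `&` Eg) (y, z) by []; rewrite OE => -[_ /= ->].
  by exists (qW (s y, m)) => //; rewrite (iotag_local Hact Us).
by exists V; split=> //; rewrite -VE.
Qed.

Lemma covering_Eg : covering_on Eg fst.
Proof.
split; first by apply: continuous_subspaceT => p; exact: cvg_fst.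
move=> y0; have [U [s [Uy0 Us]]] := local_section_exists Hact Hcov Hg y0.
have [oU _ _] := Us.
pose xs y := sval (sval (s y)).2.2.
exists U; split=> //; split=> //.
exists nat, (fun n => [set p : Y * C | U p.1 /\ p.2 = xs p.1 n]); split.
  by move=> n; have [O [oO OE]] := sheet_open Hact Us n; exists O; rewrite OE.
split; first exact: sheets_disjoint.
split; first by have := Eg_fst_preimage Hact Us.
move=> n; split.
  by move=> [y1 z1] [y2 z2]; rewrite !inE /= => -[_ ->] [_ ->] /= ->.
split; last exact: open_fst_sheet Us n.
by apply/seteqP; split=> [_ [p [Up _] <-]//|y Uy]; exists (y, xs y n).
Qed.

End EmbeddedCovering.

Theorem mainTheorem14 (R : realType) (EG : topologicalType)
    (act : EG -> autN -> EG)
    (Hact : right_action EG act) (Hcov : covering_action EG act)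
    (Hcontr : contractible R EG)
    (Y : topologicalType) (HY : hausdorff_space Y)
    (g : Y -> XG R EG act) (Hg : cts open (openXG R EG act) g) :
  embedding (openW R EG act Y g) (iotag R EG act Y g) /\
  (forall w, (iotag R EG act Y g w).1 = piW R EG act Y g w) /\
  covering_on (Eg R EG act Y g) fst /\
  Eg R EG act Y g = [set yz | Fg R EG act Y g yz.1 yz.2] /\
  closed (Eg R EG act Y g).
Proof.
have embed : embedding (openW R EG act Y g) (iotag R EG act Y g).
  split; first exact: iotag_inj.
  by split; [exact: cts_iotag|exact: open_image_iotag].
split=> //; split=> //; split; first exact: covering_Eg.
by split; [exact: Eg_Fg|exact: closed_Eg].
Qed.
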